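(* Let $\kappa\ge3$ and let $X_t$ be the walk with wall defined below. Define $P_*^{(E)}(x)=\lim_{t\to\infty}P(X_{2t}=x)$ and $P_*^{(O)}(x)=\lim_{t\to\infty}P(X_{2t+1}=x)$ for $x\in\mathbb{Z}_+$. Then these limits exist and: (1) (Case (A), $\gamma=0$) $P_*^{(E)}(x)=P_*^{(O)}(x)=0$ for all $x\ge0$. (2) (Case (B), $\gamma=\pi$) For even $x$: $P_*^{(E)}(x)=\left(\frac{\kappa-2}{\kappa-1}\right)^2\left\{\delta_0(x)+(1-\delta_0(x))\,\kappa\left(\frac{1}{\kappa-1}\right)^x\right\}$, and $P_*^{(E)}(x)=0$ for odd $x$; for odd $x$: $P_*^{(O)}(x)=\kappa\left(\frac{\kappa-2}{\kappa-1}\right)^2\left(\frac{1}{\kappa-1}\right)^x$, and $P_*^{(O)}(x)=0$ for even $x$. Here $\delta_0(x)=1$ if $x=0$ and $0$ otherwise.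
   Context: Walk with wall on $\mathbb{Z}_+=\{0,1,2,\dots\}$: fix $\kappa\ge3$, let $a_\kappa=2\sqrt{\kappa-1}/\kappa$, $b_\kappa=1-2/\kappa$, $\gamma\in\mathbb{R}$. Consider the Hilbert space with orthonormal basis $\{|0,L\rangle\}\cup\{|x,L\rangle,|x,R\rangle: x\ge1\}$ and the unitary $\widetilde U$ given by $\widetilde U|0,L\rangle=e^{i\gamma}|1,R\rangle$ and, for $x\ge1$, $\widetilde U|x,L\rangle=a_\kappa|x-1,L\rangle+b_\kappa|x+1,R\rangle$, $\widetilde U|x,R\rangle=-b_\kappa|x-1,L\rangle+a_\kappa|x+1,R\rangle$. With $\Phi_t=\widetilde U^t|0,L\rangle$, the random variable $X_t$ on $\mathbb{Z}_+$ has $P(X_t=0)=|\langle 0,L|\Phi_t\rangle|^2$ and $P(X_t=x)=|\langle x,L|\Phi_t\rangle|^2+|\langle x,R|\Phi_t\rangle|^2$ for $x\ge1$. Case (A) is $\gamma=0$ and Case (B) is $\gamma=\pi$. (These correspond to the distance from the root of the Grover walk on the $\kappa$-regular Cayley tree started at the root with uniform coin state $(1/\sqrt\kappa,\dots,1/\sqrt\kappa)$, resp. coin state $(\omega_\kappa^j/\sqrt\kappa)_{j=0}^{\kappa-1}$, $\omega_\kappa=e^{2\pi i/\kappa}$.) *)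

From Stdlib Require Import Reals.
Open Scope R_scope.

Definition C := (R * R)%type.
Definition C0 : C := (0, 0).
Definition C1 : C := (1, 0).
Definition Cadd (z w : C) : C := (fst z + fst w, snd z + snd w).
Definition Cmul (z w : C) : C :=
  (fst z * fst w - snd z * snd w, fst z * snd w + snd z * fst w).
Definition Cscal (r : R) (z : C) : C := (r * fst z, r * snd z).
Definition Cnorm2 (z : C) : R := fst z * fst z + snd z * snd z.
Definition Cexpi (g : R) : C := (cos g, sin g).

Definition a_k (k : nat) : R := 2 * sqrt (INR k - 1) / INR k.
Definition b_k (k : nat) : R := 1 - 2 / INR k.

(* A state: amplitudes on |x,L> (x >= 0) and |x,R> (x >= 1);
   the R-amplitude at x = 0 is not a basis vector and is kept equal to 0. *)
Definition state := ((nat -> C) * (nat -> C))%type.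

Definition step (k : nat) (g : R) (s : state) : state :=
  let (L, Rr) := s in
  ( fun x => Cadd (Cscal (a_k k) (L (S x))) (Cscal (- b_k k) (Rr (S x))),
    fun x => match x with
             | O => C0
             | S O => Cmul (Cexpi g) (L O)
             | S (S y as x') => Cadd (Cscal (b_k k) (L x')) (Cscal (a_k k) (Rr x'))
             end ).

Definition init : state := (fun x => match x with O => C1 | _ => C0 end, fun _ => C0).

Fixpoint Phi (k : nat) (g : R) (t : nat) : state :=
  match t with
  | O => init
  | S t' => step k g (Phi k g t')
  end.

Definition prob (k : nat) (g : R) (t x : nat) : R :=
  match x with
  | O => Cnorm2 (fst (Phi k g t) O)
  | _ => Cnorm2 (fst (Phi k g t) x) + Cnorm2 (snd (Phi k g t) x)
  end.

Definition delta0 (x : nat) : R := match x with O => 1 | _ => 0 end.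

Definition PE_B (k x : nat) : R :=
  if Nat.even x then
    ((INR k - 2) / (INR k - 1)) ^ 2 *
      (delta0 x + (1 - delta0 x) * INR k * (1 / (INR k - 1)) ^ x)
  else 0.
Definition PO_B (k x : nat) : R :=
  if Nat.even x then 0
  else INR k * ((INR k - 2) / (INR k - 1)) ^ 2 * (1 / (INR k - 1)) ^ x.

(* Method: generating functions.  For a real boundary phase ep = +-1 all
   amplitudes are real, and the amplitude of <x,L| (resp. <x,R|) at time
   x + 2n is the n-th coefficient of an explicit formal power series
   Lgf x (resp. Rgf x).  These series are built from
     D = |(1 - zX)^(1/2)|^2 with z = (a + ib)^2,  D^2 = (1 + X)^2 - 4a^2 X,
   by  m = (1 + X - D)/(2aX),  h = (m - a)/b,  l0 = N/(1 - X)  for an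
   explicit N, and  Rgf (x+1) = ep l0 m^x,  Lgf (x+1) = Rgf (x+1) h. *)

From Pilot Require Import Defs.
From Stdlib Require Import Reals Lra Lia Psatz FunctionalExtensionality.
From Coquelicot Require Import Rcomplements Rbar Hierarchy Lim_seq Series PSeries.
Open Scope R_scope.

Definition ser := nat -> R.
Definition sadd (u v : ser) : ser := fun n => u n + v n.
Definition sopp (u : ser) : ser := fun n => - u n.
Definition ssub (u v : ser) : ser := sadd u (sopp v).
Definition smul (u v : ser) : ser := PS_mult u v.
Definition cst (c : R) : ser := fun n => match n with O => c | _ => 0 end.
Definition s0 : ser := cst 0.
Definition s1 : ser := cst 1.

Lemma sum_triangle (F : nat -> nat -> R) n :
  sum_f_R0 (fun p => sum_f_R0 (fun i => F i (p - i)%nat) p) n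
  = sum_f_R0 (fun i => sum_f_R0 (F i) (n - i)) n.
Proof.
  induction n as [|n IH]; [reflexivity|].
  rewrite tech5, IH, (tech5 (fun i => sum_f_R0 (F i) (S n - i))), Nat.sub_diag.
  rewrite (sum_eq (fun i => sum_f_R0 (F i) (S n - i))
                  (fun i => sum_f_R0 (F i) (n - i) + F i (S n - i)%nat)).
  - rewrite plus_sum, tech5, Nat.sub_diag. simpl. ring.
  - intros i Hi. replace (S n - i)%nat with (S (n - i)) by lia. reflexivity.
Qed.

Lemma smul_comm u v : smul u v = smul v u.
Proof.
  extensionality n. unfold smul, PS_mult.
  rewrite <- (sum_f_R0_skip (fun k => v k * u (n - k)%nat)).
  apply sum_eq; intros i Hi. replace (n - (n - i))%nat with i by lia. ring.
Qed.

Lemma smul_assoc u v w : smul u (smul v w) = smul (smul u v) w.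
Proof.
  extensionality n. unfold smul, PS_mult.
  pose (F := fun i j => u i * v j * w (n - i - j)%nat).
  transitivity (sum_f_R0 (fun i => sum_f_R0 (F i) (n - i)) n).
  - apply sum_eq; intros i _. rewrite scal_sum. apply sum_eq; intros j _.
    unfold F. ring.
  - rewrite <- sum_triangle. apply sum_eq; intros p Hp.
    rewrite Rmult_comm, scal_sum. apply sum_eq; intros i Hi.
    unfold F. replace (n - i - (p - i))%nat with (n - p)%nat by lia. ring.
Qed.

Lemma sum_f_R0_shift1 (f : nat -> R) n :
  sum_f_R0 f (S n) = f 0%nat + sum_f_R0 (fun i => f (S i)) n.
Proof. induction n as [|n IH]; simpl in *; [|rewrite IH]; ring. Qed.

Lemma smul_cst_l c u n : smul (cst c) u n = c * u n.
Proof.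
  unfold smul, PS_mult. destruct n as [|n]; [simpl; ring|].
  rewrite sum_f_R0_shift1, Nat.sub_0_r, (sum_eq _ (fun _ => 0)), sum_cte.
  - simpl; ring.
  - intros; simpl; ring.
Qed.

Lemma ser_ring : ring_theory s0 s1 sadd smul ssub sopp (@eq ser).
Proof.
  constructor; intros.
  1-3, 9: extensionality n; unfold sadd, sopp, s0, cst; destruct n; ring.
  - extensionality n. unfold s1. rewrite smul_cst_l. ring.
  - apply smul_comm.
  - apply smul_assoc.
  - extensionality n. unfold smul, PS_mult, sadd. rewrite <- plus_sum.
    apply sum_eq; intros; ring.
  - reflexivity.
Qed.

Add Ring ser_ring : ser_ring.

Declare Scope ser_scope.
Delimit Scope ser_scope with S.
Infix "+" := sadd : ser_scope.
Infix "*" := smul : ser_scope.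
Infix "-" := ssub : ser_scope.
Notation "- u" := (sopp u) : ser_scope.

Definition X : ser := fun n => match n with 1%nat => 1 | _ => 0 end.
Definition tail (u : ser) : ser := fun n => u (S n).
Definition ones : ser := fun _ => 1.

Fixpoint spow (u : ser) (n : nat) : ser :=
  match n with O => s1 | S n' => (spow u n' * u)%S end.

Lemma smul_X_l u n : (X * u)%S n = match n with O => 0 | S m => u m end.
Proof.
  unfold smul, PS_mult. destruct n as [|n]; [simpl; ring|].
  rewrite sum_f_R0_shift1. destruct n as [|n]; [simpl; ring|].
  rewrite sum_f_R0_shift1, (sum_eq _ (fun _ => 0)), sum_cte.
  - simpl. ring.
  - intros; simpl; ring.
Qed.

Lemma smul_coef0 u v : (u * v)%S 0%nat = u 0%nat * v 0%nat.
Proof. reflexivity. Qed.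

Lemma cst_add c d : cst (c + d) = (cst c + cst d)%S.
Proof. extensionality n; unfold sadd, cst; destruct n; ring. Qed.

Lemma cst_mul c d : cst (c * d) = (cst c * cst d)%S.
Proof. extensionality n; rewrite smul_cst_l; unfold cst; destruct n; ring. Qed.

Lemma cst_sub c d : cst (c - d) = (cst c - cst d)%S.
Proof. extensionality n; unfold ssub, sadd, sopp, cst; destruct n; ring. Qed.

Lemma cst_two c : cst (2 * c) = ((s1 + s1) * cst c)%S.
Proof. rewrite cst_mul. unfold s1. rewrite <- cst_add. replace (1 + 1) with 2 by ring. reflexivity. Qed.

Lemma X_tail u : (X * tail u = u - cst (u 0%nat))%S.
Proof.
  extensionality n. rewrite smul_X_l.
  unfold ssub, sadd, sopp, cst, tail. destruct n; ring.
Qed.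

Lemma tail_X u : tail (X * u)%S = u.
Proof. extensionality n. unfold tail. rewrite smul_X_l. reflexivity. Qed.

Lemma X_cancel u v : (X * u = X * v)%S -> u = v.
Proof. intros H. rewrite <- (tail_X u), <- (tail_X v), H. reflexivity. Qed.

Lemma cst_cancel c u v : c <> 0 -> (cst c * u = cst c * v)%S -> u = v.
Proof.
  intros Hc H.
  transitivity (cst (/ c) * (cst c * u))%S.
  - rewrite smul_assoc, <- cst_mul, Rinv_l by exact Hc. fold s1. ring.
  - rewrite H, smul_assoc, <- cst_mul, Rinv_l by exact Hc. fold s1. ring.
Qed.

Lemma ones_inverse : (ones * (s1 - X) = s1)%S.
Proof.
  replace (ones * (s1 - X))%S with (ones - X * ones)%S by ring.
  extensionality n. unfold ssub, sadd, sopp. rewrite smul_X_l.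
  unfold ones, s1, cst. destruct n; ring.
Qed.

Lemma ones_partial_sums u n : (ones * u)%S n = sum_n u n.
Proof.
  rewrite sum_n_Reals, smul_comm. unfold smul, PS_mult, ones.
  apply sum_eq; intros; ring.
Qed.

(* A series is absolutely summable when the series of absolute values of its
   coefficients converges; these are the series whose value at X = 1 behaves
   multiplicatively (Mertens' theorem, [is_series_mult]). *)
Definition abs_summable (u : ser) : Prop := ex_series (fun n => Rabs (u n)).

Lemma sum_n_cst c n : sum_n (cst c) n = c.
Proof.
  induction n as [|n IH]; [apply sum_O|].
  rewrite sum_Sn, IH. unfold plus; simpl. ring.
Qed.

Lemma sum_n_X n : sum_n X (S n) = 1.
Proof.
  induction n as [|n IH].
  - rewrite sum_Sn, sum_O. unfold plus; simpl. ring.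
  - rewrite sum_Sn, IH. unfold plus; simpl. ring.
Qed.

Lemma is_series_cst c : is_series (cst c) c.
Proof.
  change (is_lim_seq (sum_n (cst c)) c).
  apply (is_lim_seq_ext (fun _ => c)); [intros n; now rewrite sum_n_cst|].
  apply is_lim_seq_const.
Qed.

Lemma is_series_X : is_series X 1.
Proof.
  change (is_lim_seq (sum_n X) 1). apply is_lim_seq_incr_1.
  apply (is_lim_seq_ext (fun _ => 1)); [intros n; now rewrite sum_n_X|].
  apply is_lim_seq_const.
Qed.

Lemma is_series_add (u v : ser) (a b : R) :
  is_series u a -> is_series v b -> is_series (u + v)%S (a + b).
Proof. intros Ha Hb. exact (is_series_plus u v a b Ha Hb). Qed.

Lemma is_series_sub (u v : ser) (a b : R) :
  is_series u a -> is_series v b -> is_series (u - v)%S (a - b).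
Proof. intros Ha Hb. exact (is_series_minus u v a b Ha Hb). Qed.

Lemma is_series_cst_mul (c : R) (u : ser) (a : R) : is_series u a -> is_series (cst c * u)%S (c * a).
Proof.
  intros Ha. apply (is_series_ext (fun n => c * u n)).
  - intros n. rewrite smul_cst_l. reflexivity.
  - apply (is_series_scal_l c u a Ha).
Qed.

Lemma is_series_tail (u : ser) (a : R) : is_series u a -> is_series (tail u) (a - u 0%nat).
Proof.
  intros Ha. apply is_series_incr_1.
  assert (E : a = a - u 0%nat + u 0%nat) by ring.
  rewrite E in Ha. exact Ha.
Qed.

Lemma abs_summable_cst c : abs_summable (cst c).
Proof.
  exists (Rabs c). apply (is_series_ext (cst (Rabs c))).
  - intros [|n]; simpl; [reflexivity|]. now rewrite Rabs_R0.
  - apply is_series_cst.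
Qed.

Lemma abs_summable_X : abs_summable X.
Proof.
  exists 1. apply (is_series_ext X).
  - intros [|[|n]]; simpl; rewrite ?Rabs_R0, ?Rabs_R1; reflexivity.
  - apply is_series_X.
Qed.

Lemma abs_summable_le (u w : ser) :
  (forall n, Rabs (u n) <= w n) -> ex_series w -> abs_summable u.
Proof.
  intros Hle Hw. apply (@ex_series_le R_AbsRing R_CompleteNormedModule _ w); [|exact Hw].
  intros n. change (Rabs (Rabs (u n)) <= w n). rewrite Rabs_Rabsolu. apply Hle.
Qed.

Lemma abs_summable_add u v :
  abs_summable u -> abs_summable v -> abs_summable (u + v)%S.
Proof.
  intros Hu Hv. apply (abs_summable_le _ (fun n => Rabs (u n) + Rabs (v n))).
  - intros n. apply Rabs_triang.
  - exact (ex_series_plus _ _ Hu Hv).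
Qed.

Lemma abs_summable_cst_mul c u : abs_summable u -> abs_summable (cst c * u)%S.
Proof.
  intros Hu. apply (abs_summable_le _ (fun n => Rabs c * Rabs (u n))).
  - intros n. rewrite smul_cst_l, Rabs_mult. apply Rle_refl.
  - exact (ex_series_scal_l (Rabs c) _ Hu).
Qed.

Lemma abs_summable_sub u v :
  abs_summable u -> abs_summable v -> abs_summable (u - v)%S.
Proof.
  intros Hu Hv. replace (u - v)%S with (u + cst (-1) * v)%S.
  - apply abs_summable_add; [exact Hu|]. apply abs_summable_cst_mul, Hv.
  - extensionality n. unfold ssub, sadd, sopp. rewrite smul_cst_l. ring.
Qed.

Lemma abs_summable_tail u : abs_summable u -> abs_summable (tail u).
Proof. apply ex_series_incr_1. Qed.

Definition sabs (u : ser) : ser := fun n => Rabs (u n).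

Lemma abs_summable_mul u v :
  abs_summable u -> abs_summable v -> abs_summable (u * v)%S.
Proof.
  intros Hu Hv. apply (abs_summable_le _ (sabs u * sabs v)%S).
  - intros n. unfold smul, PS_mult, sabs. eapply Rle_trans; [apply Rsum_abs|].
    right. apply sum_eq; intros. apply Rabs_mult.
  - eexists. apply is_series_mult_pos; try (intros; apply Rabs_pos).
    + apply Series_correct, Hu.
    + apply Series_correct, Hv.
Qed.

Lemma is_series_mul u v a b : abs_summable u -> abs_summable v ->
  is_series u a -> is_series v b -> is_series (u * v)%S (a * b).
Proof. intros Hu Hv Ha Hb. exact (is_series_mult u v a b Ha Hb Hu Hv). Qed.

Lemma abs_summable_spow u n : abs_summable u -> abs_summable (spow u n).
Proof.
  intros Hu. induction n as [|n IH]; [apply abs_summable_cst|].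
  apply abs_summable_mul; assumption.
Qed.

Lemma is_series_spow u a n :
  abs_summable u -> is_series u a -> is_series (spow u n) (a ^ n).
Proof.
  intros Hu Ha. induction n as [|n IH]; [apply is_series_cst|].
  change (is_series (spow u n * u)%S (a ^ S n)).
  replace (a ^ S n) with (a ^ n * a) by (simpl; ring).
  apply is_series_mul; auto using abs_summable_spow.
Qed.

Lemma coef_ones_mul_cv (G : ser) (g : R) : is_series G g -> Un_cv (ones * G)%S g.
Proof.
  intros HG. apply is_lim_seq_Reals.
  apply (is_lim_seq_ext (sum_n G)); [intros n; now rewrite ones_partial_sums|].
  exact HG.
Qed.

(* The series of (1 - X)^(-1/2): its coefficients C(2n,n)/4^n are given by
   the recursion below. *)
Fixpoint cbin (n : nat) : R :=
  match n with O => 1 | S m => cbin m * (2 * INR m + 1) / (2 * INR m + 2) end.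

Lemma cbin_pos n : 0 < cbin n.
Proof.
  induction n as [|n IH]; simpl; [lra|]. pose proof (pos_INR n).
  apply Rdiv_lt_0_compat; [apply Rmult_lt_0_compat|]; lra.
Qed.

Lemma cbin_decr n : cbin (S n) <= cbin n.
Proof.
  simpl. pose proof (pos_INR n). pose proof (cbin_pos n).
  apply Rmult_le_reg_r with (2 * INR n + 2); [lra|].
  unfold Rdiv. rewrite Rmult_assoc, Rinv_l by lra. nra.
Qed.

Definition euler (u : ser) : ser := fun n => INR n * u n.

Lemma euler_mul u v : euler (u * v)%S = (euler u * v + u * euler v)%S.
Proof.
  extensionality n. unfold euler, sadd, smul, PS_mult.
  rewrite scal_sum, <- plus_sum. apply sum_eq; intros i Hi.
  rewrite minus_INR by exact Hi. ring.
Qed.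

Lemma euler_cbin : ((s1 - X) * euler cbin = cst (1/2) * (X * cbin))%S.
Proof.
  extensionality n.
  replace ((s1 - X) * euler cbin)%S with (euler cbin - X * euler cbin)%S by ring.
  unfold ssub, sadd, sopp. rewrite smul_cst_l, !smul_X_l. unfold euler.
  destruct n as [|m]; [simpl; ring|].
  simpl cbin. rewrite S_INR. pose proof (pos_INR m). field. lra.
Qed.

(* Comparing coefficients in (1 - X) E(c^2) = X c^2 shows that c^2 has
   constant coefficients, i.e. c^2 = 1/(1 - X). *)
Lemma cbin_square : (cbin * cbin)%S = ones.
Proof.
  assert (Hdiff : ((s1 - X) * euler (cbin * cbin) = X * (cbin * cbin))%S).
  { rewrite euler_mul.
    replace ((s1 - X) * (euler cbin * cbin + cbin * euler cbin))%S
      with ((s1 + s1) * cbin * ((s1 - X) * euler cbin))%S by ring.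
    rewrite euler_cbin.
    replace ((s1 + s1) * cbin * (cst (1 / 2) * (X * cbin)))%S
      with (cst (2 * (1 / 2)) * (X * (cbin * cbin)))%S by (rewrite cst_two; ring).
    replace (2 * (1 / 2)) with 1 by field. fold s1. ring. }
  extensionality n. unfold ones. induction n as [|n IH]; [unfold smul, PS_mult; simpl; ring|].
  assert (E := f_equal (fun f => f (S n)) Hdiff). cbv beta in E.
  replace ((s1 - X) * euler (cbin * cbin))%S
    with (euler (cbin * cbin) - X * euler (cbin * cbin))%S in E by ring.
  unfold ssub, sadd, sopp in E. rewrite !smul_X_l in E. unfold euler in E.
  rewrite IH, S_INR in E. pose proof (pos_INR n).
  apply Rmult_eq_reg_l with (INR n + 1); lra.
Qed.

Definition sqrt1mX : ser := ((s1 - X) * cbin)%S.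

Lemma sqrt1mX_square : (sqrt1mX * sqrt1mX = s1 - X)%S.
Proof.
  unfold sqrt1mX.
  replace ((s1 - X) * cbin * ((s1 - X) * cbin))%S
    with ((s1 - X) * ((s1 - X) * (cbin * cbin)))%S by ring.
  rewrite cbin_square, (smul_comm _ ones), ones_inverse. ring.
Qed.

Lemma sqrt1mX_coef n :
  sqrt1mX n = match n with O => 1 | S m => cbin (S m) - cbin m end.
Proof.
  unfold sqrt1mX. replace ((s1 - X) * cbin)%S with (cbin - X * cbin)%S by ring.
  unfold ssub, sadd, sopp. rewrite smul_X_l. destruct n; simpl; ring.
Qed.

(* The coefficients after the first are negative and telescope, so the
   partial sums of their absolute values stay below 2. *)
Lemma sqrt1mX_abs_partial_sums n : sum_n (sabs sqrt1mX) n = 2 - cbin n.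
Proof.
  induction n as [|n IH].
  - rewrite sum_O. unfold sabs. rewrite sqrt1mX_coef, Rabs_R1. simpl. ring.
  - rewrite sum_Sn, IH. unfold sabs.
    rewrite sqrt1mX_coef, Rabs_left1 by (pose proof (cbin_decr n); lra).
    change (2 - cbin n + - (cbin (S n) - cbin n) = 2 - cbin (S n)). ring.
Qed.

Lemma abs_summable_sqrt1mX : abs_summable sqrt1mX.
Proof.
  destruct (ex_finite_lim_seq_incr (sum_n (sabs sqrt1mX)) 2) as [l Hl].
  - intros n. rewrite sum_Sn. pose proof (Rabs_pos (sqrt1mX (S n))).
    change (sum_n (sabs sqrt1mX) n <= sum_n (sabs sqrt1mX) n + Rabs (sqrt1mX (S n))). lra.
  - intros n. rewrite sqrt1mX_abs_partial_sums. pose proof (cbin_pos n). lra.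
  - exists l. exact Hl.
Qed.

Fixpoint cpow (z : Defs.C) (n : nat) : Defs.C :=
  match n with O => Defs.C1 | S m => Cmul (cpow z m) z end.

Lemma Cmul_assoc z w v : Cmul z (Cmul w v) = Cmul (Cmul z w) v.
Proof.
  destruct z as [z1 z2], w as [w1 w2], v as [v1 v2]. unfold Cmul; simpl.
  f_equal; ring.
Qed.

Lemma cpow_add z i j : cpow z (i + j) = Cmul (cpow z i) (cpow z j).
Proof.
  induction j as [|j IH].
  - rewrite Nat.add_0_r. destruct (cpow z i) as [x y]. unfold Cmul; simpl. f_equal; ring.
  - rewrite Nat.add_succ_r. simpl. rewrite IH, Cmul_assoc. reflexivity.
Qed.

Lemma Cnorm2_mul z w : Cnorm2 (Cmul z w) = Cnorm2 z * Cnorm2 w.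
Proof. destruct z, w. unfold Cnorm2, Cmul; simpl. ring. Qed.

Lemma cpow_unit z n : Cnorm2 z = 1 -> Cnorm2 (cpow z n) = 1.
Proof.
  intros Hz. induction n as [|n IH]; [unfold Cnorm2; simpl; ring|].
  simpl. rewrite Cnorm2_mul, IH, Hz. ring.
Qed.

Lemma cpow_bound z n : Cnorm2 z = 1 ->
  Rabs (fst (cpow z n)) <= 1 /\ Rabs (snd (cpow z n)) <= 1.
Proof.
  intros Hz. pose proof (cpow_unit z n Hz) as H. unfold Cnorm2 in H.
  split; apply Rabs_le; nra.
Qed.

Lemma abs_summable_bounded_mul (u w : ser) :
  abs_summable u -> (forall n, Rabs (w n) <= 1) -> abs_summable (fun n => u n * w n).
Proof.
  intros Hu Hw. apply (abs_summable_le _ (sabs u)); [|exact Hu].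
  intros n. unfold sabs. rewrite Rabs_mult.
  pose proof (Rabs_pos (u n)). pose proof (Hw n). nra.
Qed.

Definition twist_re (z : Defs.C) (u : ser) : ser := fun n => u n * fst (cpow z n).
Definition twist_im (z : Defs.C) (u : ser) : ser := fun n => u n * snd (cpow z n).

Lemma twist_mul z u v :
  (twist_re z u * twist_re z v - twist_im z u * twist_im z v)%S = twist_re z (u * v)%S /\
  (twist_re z u * twist_im z v + twist_im z u * twist_re z v)%S = twist_im z (u * v)%S.
Proof.
  split; extensionality n; unfold ssub, sadd, sopp, twist_re, twist_im, smul, PS_mult;
    [rewrite <- Rminus_def, <- minus_sum | rewrite <- plus_sum];
    rewrite Rmult_comm, scal_sum; apply sum_eq; intros i Hi;
    pose proof (cpow_add z i (n - i)) as E; replace (i + (n - i))%nat with n in E by lia;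
    rewrite E; destruct (cpow z i), (cpow z (n - i)); unfold Cmul; simpl; ring.
Qed.

Lemma twist_1mX z :
  twist_re z (s1 - X)%S = (s1 - cst (fst z) * X)%S /\
  twist_im z (s1 - X)%S = (- (cst (snd z) * X))%S.
Proof.
  destruct z as [c d].
  split; extensionality n; unfold twist_re, twist_im, ssub, sadd, sopp;
    rewrite smul_cst_l; destruct n as [|[|n]]; unfold s1, cst, X; simpl; ring.
Qed.

Lemma abs_summable_twist z u : Cnorm2 z = 1 -> abs_summable u ->
  abs_summable (twist_re z u) /\ abs_summable (twist_im z u).
Proof.
  intros Hz Hu. split; apply abs_summable_bounded_mul; try exact Hu;
    intros n; apply (cpow_bound z n Hz).
Qed.

(* D(z) = |(1 - zX)^(1/2)|^2, a real series whose square is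
   (1 - zX)(1 - conj(z) X) = 1 - 2 Re(z) X + X^2 when |z| = 1. *)
Definition Dser (z : Defs.C) : ser :=
  (twist_re z sqrt1mX * twist_re z sqrt1mX + twist_im z sqrt1mX * twist_im z sqrt1mX)%S.

Lemma Dser_square z : Cnorm2 z = 1 ->
  (Dser z * Dser z = s1 - cst (2 * fst z) * X + X * X)%S.
Proof.
  intros Hz. unfold Dser.
  set (x := twist_re z sqrt1mX). set (y := twist_im z sqrt1mX).
  replace ((x * x + y * y) * (x * x + y * y))%S
    with ((x * x - y * y) * (x * x - y * y) + (x * y + y * x) * (x * y + y * x))%S by ring.
  destruct (twist_mul z sqrt1mX sqrt1mX) as [Hre Him]. fold x y in Hre, Him.
  rewrite Hre, Him, sqrt1mX_square. destruct (twist_1mX z) as [-> ->].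
  assert (Hunit : (cst (fst z) * cst (fst z) + cst (snd z) * cst (snd z) = s1)%S).
  { rewrite <- !cst_mul, <- cst_add. unfold Cnorm2 in Hz. rewrite Hz. reflexivity. }
  rewrite cst_two.
  transitivity (s1 - (s1 + s1) * cst (fst z) * X
                + (cst (fst z) * cst (fst z) + cst (snd z) * cst (snd z)) * X * X)%S; [ring|].
  rewrite Hunit. ring.
Qed.

Lemma Dser_coef0 z : Dser z 0%nat = 1.
Proof.
  unfold Dser, sadd. rewrite !smul_coef0. unfold twist_re, twist_im.
  rewrite sqrt1mX_coef. simpl. ring.
Qed.

Lemma abs_summable_Dser z : Cnorm2 z = 1 -> abs_summable (Dser z).
Proof.
  intros Hz.
  destruct (abs_summable_twist z sqrt1mX Hz abs_summable_sqrt1mX) as [Hre Him].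
  apply abs_summable_add; apply abs_summable_mul; assumption.
Qed.

(* Evaluating at X = 1: D(z)(1) = |1 - z|, computed as the nonnegative
   square root of the value 2 - 2 Re(z) of its square. *)
Lemma is_series_Dser z : Cnorm2 z = 1 -> is_series (Dser z) (sqrt (2 - 2 * fst z)).
Proof.
  intros Hz.
  destruct (abs_summable_twist z sqrt1mX Hz abs_summable_sqrt1mX) as [Hre Him].
  destruct (ex_series_Rabs _ Hre) as [al Hal].
  destruct (ex_series_Rabs _ Him) as [be Hbe].
  assert (HD : is_series (Dser z) (al * al + be * be)).
  { apply is_series_add; apply is_series_mul; assumption. }
  assert (HD2 : is_series (Dser z * Dser z)%S ((al * al + be * be) * (al * al + be * be))).
  { apply is_series_mul; auto using abs_summable_Dser. }
  assert (HQ : is_series (s1 - cst (2 * fst z) * X + X * X)%S (1 - 2 * fst z * 1 + 1 * 1)).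
  { apply is_series_add; [apply is_series_sub|apply is_series_mul].
    - apply is_series_cst.
    - apply is_series_cst_mul, is_series_X.
    all: auto using is_series_X, abs_summable_X. }
  rewrite Dser_square in HD2 by exact Hz.
  apply is_series_unique in HD2. apply is_series_unique in HQ.
  replace (sqrt (2 - 2 * fst z)) with (al * al + be * be); [exact HD|].
  rewrite <- (sqrt_square (al * al + be * be)) by nra. f_equal. rewrite <- HD2, HQ. ring.
Qed.

Lemma eq_of_sub_zero u v : (u - v = s0)%S -> u = v.
Proof. intros H. transitivity (u - v + v)%S; [ring|]. rewrite H. ring. Qed.

Lemma cst_inv_r c : c <> 0 -> (cst c * cst (/ c) = s1)%S.
Proof. intros Hc. rewrite <- cst_mul, Rinv_r by exact Hc. reflexivity. Qed.

Section WalkGeneratingFunctions.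

Variables (a b ep : R) (D : ser).
Local Notation A := (cst a).
Local Notation B := (cst b).
Local Notation E := (cst ep).

(* m = (1 + X - D) / (2aX) is the power-series root of
   a X m^2 - (1 + X) m + a = 0 (see [gf_m_quadratic]), and h = (m - a) / b. *)
Definition gf_m : ser := (cst (/ (2 * a)) * tail (s1 + X - D))%S.
Definition gf_h : ser := (cst (/ b) * (gf_m - A))%S.
Definition gf_N : ser :=
  (cst (/ (2 * (b - ep))) * ((s1 + s1) * B - E * (s1 - X) - E * D))%S.
Definition gf_l0 : ser := (ones * gf_N)%S.

Definition Rgf (x : nat) : ser :=
  match x with O => s0 | S x' => (E * gf_l0 * spow gf_m x')%S end.
Definition Lgf (x : nat) : ser :=
  match x with O => gf_l0 | S x' => (Rgf x * gf_h)%S end.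

Hypothesis Ha : 0 < a.
Hypothesis Hb : 0 < b.
Hypothesis Hab : a * a + b * b = 1.
Hypothesis Hep : ep * ep = 1.
Hypothesis Hbep : b <> ep.
Hypothesis HD0 : D 0%nat = 1.
Hypothesis HDsq : (D * D = (s1 + X) * (s1 + X) - (s1 + s1) * (s1 + s1) * A * A * X)%S.

Lemma unit_AB : (A * A + B * B = s1)%S.
Proof. rewrite <- !cst_mul, <- cst_add, Hab. reflexivity. Qed.

Lemma unit_E : (E * E = s1)%S.
Proof. rewrite <- cst_mul, Hep. reflexivity. Qed.

Lemma gf_m_eq : ((s1 + s1) * A * (X * gf_m) = s1 + X - D)%S.
Proof.
  replace ((s1 + s1) * A * (X * gf_m))%S
    with (cst (2 * a) * cst (/ (2 * a)) * (X * tail (s1 + X - D)))%S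
    by (unfold gf_m; rewrite cst_two; ring).
  rewrite X_tail, cst_inv_r by lra.
  replace ((s1 + X - D)%S 0%nat) with 0
    by (unfold ssub, sadd, sopp; rewrite HD0; simpl; ring).
  fold s0. ring.
Qed.

Lemma gf_h_eq : (B * gf_h = gf_m - A)%S.
Proof. unfold gf_h. rewrite smul_assoc, cst_inv_r by lra. ring. Qed.

Lemma gf_m_quadratic : (A * X * gf_m * gf_m + A = (s1 + X) * gf_m)%S.
Proof.
  set (m := gf_m). set (T := ((s1 + s1) * A * (X * m))%S).
  apply (cst_cancel (4 * a)); [lra|]. apply X_cancel, eq_of_sub_zero.
  replace (cst (4 * a)) with ((s1 + s1) * (s1 + s1) * A)%S
    by (rewrite <- smul_assoc, <- !cst_two; f_equal; ring).
  transitivity (T * T - (s1 + s1) * (s1 + X) * T + (s1 + s1) * (s1 + s1) * A * A * X)%S;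
    [unfold T; ring|].
  unfold T, m. rewrite gf_m_eq.
  transitivity (D * D - ((s1 + X) * (s1 + X) - (s1 + s1) * (s1 + s1) * A * A * X))%S; [ring|].
  rewrite HDsq. ring.
Qed.

Lemma gf_h_rec : gf_h = (X * (gf_m * (A * gf_h - B)))%S.
Proof.
  apply (cst_cancel b); [lra|]. rewrite gf_h_eq.
  transitivity (X * gf_m * (A * (B * gf_h) - B * B))%S; [|ring].
  rewrite gf_h_eq.
  transitivity (A * X * gf_m * gf_m + A - (s1 + X) * gf_m + gf_m - A
                + X * gf_m * (s1 - (A * A + B * B)))%S; [|ring].
  rewrite gf_m_quadratic, unit_AB. ring.
Qed.

Lemma gf_h_shift : ((s1 + s1) * B * X * (A * gf_h - B) = s1 - X - D)%S.
Proof.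
  transitivity ((s1 + s1) * X * (A * (B * gf_h) - B * B))%S; [ring|].
  rewrite gf_h_eq.
  transitivity ((s1 + s1) * A * (X * gf_m) - (s1 + s1) * X * (A * A + B * B))%S; [ring|].
  rewrite gf_m_eq, unit_AB. ring.
Qed.

Lemma gf_N_eq :
  (gf_N * ((s1 + s1) * B - E * (s1 - X - D)) = (s1 + s1) * B * (s1 - X))%S.
Proof.
  assert (HN : (cst (2 * (b - ep)) * gf_N = (s1 + s1) * B - E * (s1 - X) - E * D)%S).
  { unfold gf_N. rewrite smul_assoc, cst_inv_r; [ring|].
    apply Rmult_integral_contrapositive; split; lra. }
  apply (cst_cancel (2 * (b - ep))); [apply Rmult_integral_contrapositive; split; lra|].
  rewrite smul_assoc, HN.
  transitivity ((s1 + s1) * (s1 + s1) * B * B - (s1 + s1) * (s1 + s1) * B * E * (s1 - X)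
                + E * E * ((s1 - X) * (s1 - X) - D * D))%S; [ring|].
  rewrite unit_E, HDsq.
  transitivity ((s1 + s1) * (s1 + s1) * (B * B - B * E * (s1 - X) - B * B * X
                + X * (A * A + B * B - s1)))%S; [ring|].
  rewrite unit_AB, cst_two, cst_sub. ring.
Qed.

(* l0 = 1 + X ep l0 (a h - b): the walk equation at the wall. *)
Lemma gf_l0_eq : gf_l0 = (s1 + X * (E * gf_l0 * (A * gf_h - B)))%S.
Proof.
  assert (Hl0 : (gf_l0 * ((s1 + s1) * B - E * (s1 - X - D)) = (s1 + s1) * B)%S).
  { unfold gf_l0. rewrite <- smul_assoc, gf_N_eq.
    transitivity ((s1 + s1) * B * (ones * (s1 - X)))%S; [ring|].
    rewrite ones_inverse. ring. }
  apply (cst_cancel (2 * b)); [lra|]. rewrite cst_two. apply eq_of_sub_zero.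
  transitivity ((s1 + s1) * B * gf_l0 - (s1 + s1) * B
                - E * gf_l0 * ((s1 + s1) * B * X * (A * gf_h - B)))%S; [ring|].
  rewrite gf_h_shift.
  transitivity (gf_l0 * ((s1 + s1) * B - E * (s1 - X - D)) - (s1 + s1) * B)%S; [ring|].
  rewrite Hl0. ring.
Qed.

Lemma Lgf_rec x : Lgf x = (cst (delta0 x) + X * (A * Lgf (S x) - B * Rgf (S x)))%S.
Proof.
  destruct x as [|x]; simpl Lgf; simpl Rgf; simpl delta0.
  - rewrite gf_l0_eq at 1. fold s1. ring.
  - rewrite gf_h_rec at 1. fold s0. ring.
Qed.

Lemma Rgf_1 : Rgf 1 = (E * Lgf 0)%S.
Proof. simpl. ring. Qed.

Lemma Rgf_rec x : Rgf (S (S x)) = (B * Lgf (S x) + A * Rgf (S x))%S.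
Proof.
  unfold Lgf, Rgf. simpl spow.
  transitivity (E * gf_l0 * spow gf_m x * (B * gf_h + A))%S; [rewrite gf_h_eq|]; ring.
Qed.

Lemma Lgf_coef_S x n : Lgf x (S n) = a * Lgf (S x) n - b * Rgf (S x) n.
Proof.
  rewrite Lgf_rec. unfold sadd at 1. rewrite smul_X_l.
  unfold ssub, sadd, sopp. rewrite !smul_cst_l. simpl. ring.
Qed.

Lemma Lgf_coef_0 x : Lgf x 0%nat = delta0 x.
Proof. rewrite Lgf_rec. unfold sadd. rewrite smul_X_l. simpl. ring. Qed.

Lemma Rgf_coef_1 n : Rgf 1 n = ep * Lgf 0 n.
Proof. rewrite Rgf_1, smul_cst_l. reflexivity. Qed.

Lemma Rgf_coef_S x n : Rgf (S (S x)) n = b * Lgf (S x) n + a * Rgf (S x) n.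
Proof. rewrite Rgf_rec. unfold sadd. rewrite !smul_cst_l. reflexivity. Qed.

End WalkGeneratingFunctions.

Definition amp (F : nat -> ser) (t x : nat) : R :=
  if Nat.leb x t then if Nat.even (t - x) then F x (Nat.div2 (t - x)) else 0 else 0.

Lemma amp_at F x d : amp F (x + d) x = if Nat.even d then F x (Nat.div2 d) else 0.
Proof.
  unfold amp. rewrite (proj2 (Nat.leb_le x (x + d))) by lia.
  replace (x + d - x)%nat with d by lia. reflexivity.
Qed.

Lemma amp_diag F x : amp F x x = F x 0%nat.
Proof. unfold amp. rewrite Nat.leb_refl, Nat.sub_diag. reflexivity. Qed.

Lemma amp_out F t x : (t < x)%nat -> amp F t x = 0.
Proof. intros H. unfold amp. rewrite (proj2 (Nat.leb_gt x t)) by lia. reflexivity. Qed.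

Lemma Un_cv_const c : Un_cv (fun _ => c) c.
Proof. apply is_lim_seq_Reals, is_lim_seq_const. Qed.

Lemma amp_cv F x c l (tau : nat -> nat) :
  (forall t, (c <= t)%nat -> tau t = (x + 2 * (t - c))%nat) ->
  Un_cv (F x) l -> Un_cv (fun t => amp F (tau t) x) l.
Proof.
  intros Htau Hl eps Heps. destruct (Hl eps Heps) as [N HN].
  exists (N + c)%nat. intros t Ht. rewrite Htau by lia.
  rewrite amp_at, Nat.even_mul, Nat.div2_double. apply HN. lia.
Qed.

Lemma amp_parity F t x : Nat.even t <> Nat.even x -> amp F t x = 0.
Proof.
  intros Hpar. unfold amp. destruct (Nat.leb_spec x t); [|reflexivity].
  rewrite Nat.even_sub by lia.
  destruct (Nat.even t), (Nat.even x); simpl; congruence.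
Qed.

Lemma amp_time_limits F x l : Un_cv (F x) l ->
  Un_cv (fun t => amp F (2 * t) x) (if Nat.even x then l else 0) /\
  Un_cv (fun t => amp F (2 * t + 1) x) (if Nat.even x then 0 else l).
Proof.
  intros Hl. assert (Hzero : forall tau : nat -> nat,
    (forall t, Nat.even (tau t) <> Nat.even x) -> Un_cv (fun t => amp F (tau t) x) 0).
  { intros tau Htau. apply (Un_cv_ext (fun _ => 0)); [|apply Un_cv_const].
    intros t. symmetry. apply amp_parity, Htau. }
  destruct (Nat.Even_or_Odd x) as [[j ->]|[j ->]];
    rewrite ?Nat.even_even, ?Nat.even_odd; split.
  - apply (amp_cv F _ j); [intros; lia|exact Hl].
  - apply Hzero. intros t. rewrite Nat.even_odd, Nat.even_even. congruence.
  - apply Hzero. intros t. rewrite Nat.even_odd, Nat.even_even. congruence.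
  - apply (amp_cv F _ j); [intros; lia|exact Hl].
Qed.

Section Amplitudes.

Variables (L Rr : nat -> ser) (a b ep : R).
Hypothesis HL : forall x n, L x (S n) = a * L (S x) n - b * Rr (S x) n.
Hypothesis HL0 : forall x, L (S x) 0%nat = 0.
Hypothesis HR0 : forall n, Rr 0%nat n = 0.
Hypothesis HR1 : forall n, Rr 1%nat n = ep * L 0%nat n.
Hypothesis HR : forall y n, Rr (S (S y)) n = b * L (S y) n + a * Rr (S y) n.

Lemma amp_step_L t x : amp L (S t) x = a * amp L t (S x) - b * amp Rr t (S x).
Proof.
  destruct (Compare_dec.le_lt_dec x t) as [Hle|Hlt].
  - destruct (t - x)%nat as [|d] eqn:Ed.
    + replace (S t) with (x + 1)%nat by lia. rewrite amp_at, !amp_out by lia.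
      simpl. ring.
    + replace (S t) with (x + S (S d))%nat by lia. replace t with (S x + d)%nat by lia.
      rewrite !amp_at, Nat.even_succ_succ.
      destruct (Nat.even d); [apply HL|ring].
  - rewrite !(amp_out _ t) by lia.
    destruct (Nat.eq_dec x (S t)) as [->|Hne].
    + rewrite amp_diag, HL0. ring.
    + rewrite amp_out by lia. ring.
Qed.

Lemma amp_R0 t : amp Rr t 0 = 0.
Proof. unfold amp. destruct (Nat.leb 0 t), (Nat.even (t - 0)); auto. Qed.

Lemma amp_step_R1 t : amp Rr (S t) 1 = ep * amp L t 0.
Proof.
  replace (S t) with (1 + t)%nat by lia. replace t with (0 + t)%nat at 2 by lia.
  rewrite !amp_at. destruct (Nat.even t); [apply HR1|ring].
Qed.

Lemma amp_step_R t y :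
  amp Rr (S t) (S (S y)) = b * amp L t (S y) + a * amp Rr t (S y).
Proof.
  destruct (Compare_dec.le_lt_dec (S y) t) as [Hle|Hlt].
  - replace (S t) with (S (S y) + (t - S y))%nat by lia.
    replace t with (S y + (t - S y))%nat at 2 3 by lia.
    rewrite !amp_at. destruct (Nat.even (t - S y)); [apply HR|ring].
  - rewrite !amp_out by lia. ring.
Qed.

Lemma walk_amplitudes k g :
  a_k k = a -> b_k k = b -> Cexpi g = (ep, 0) -> L 0%nat 0%nat = 1 ->
  forall t x, fst (Phi k g t) x = (amp L t x, 0) /\ snd (Phi k g t) x = (amp Rr t x, 0).
Proof.
  intros Hak Hbk Hg Hinit t. induction t as [|t IH]; intros x.
  - split; destruct x; simpl; unfold amp; simpl; rewrite ?Hinit, ?HR0; reflexivity.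
  - simpl Phi. unfold step. destruct (Phi k g t) as [Lt Rt]. simpl in IH |- *. split.
    + destruct (IH (S x)) as [-> ->]. rewrite Hak, Hbk, amp_step_L.
      unfold Cadd, Cscal. simpl. f_equal; ring.
    + destruct x as [|[|y]].
      * rewrite amp_R0. reflexivity.
      * destruct (IH 0%nat) as [-> _]. rewrite Hg, amp_step_R1.
        unfold Cmul. simpl. f_equal; ring.
      * destruct (IH (S y)) as [-> ->]. rewrite Hak, Hbk, amp_step_R.
        unfold Cadd, Cscal. simpl. f_equal; ring.
Qed.

Lemma walk_prob k g :
  a_k k = a -> b_k k = b -> Cexpi g = (ep, 0) -> L 0%nat 0%nat = 1 ->
  forall t x, prob k g t x = amp L t x * amp L t x + amp Rr t x * amp Rr t x.
Proof.
  intros Hak Hbk Hg Hinit t x.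
  destruct (walk_amplitudes k g Hak Hbk Hg Hinit t x) as [HLx HRx].
  unfold prob. destruct x as [|x].
  - rewrite HLx, amp_R0. unfold Cnorm2. simpl. ring.
  - rewrite HLx, HRx. unfold Cnorm2. simpl. ring.
Qed.

Lemma walk_prob_limits k g (lL lR : nat -> R) :
  a_k k = a -> b_k k = b -> Cexpi g = (ep, 0) -> L 0%nat 0%nat = 1 ->
  (forall x, Un_cv (L x) (lL x)) -> (forall x, Un_cv (Rr x) (lR x)) ->
  forall x,
    Un_cv (fun t => prob k g (2 * t) x)
      (if Nat.even x then lL x * lL x + lR x * lR x else 0) /\
    Un_cv (fun t => prob k g (2 * t + 1) x)
      (if Nat.even x then 0 else lL x * lL x + lR x * lR x).
Proof.
  intros Hak Hbk Hg Hinit HlimL HlimR x.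
  assert (Hsq : forall tau lx ly,
    Un_cv (fun t => amp L (tau t) x) lx -> Un_cv (fun t => amp Rr (tau t) x) ly ->
    Un_cv (fun t => prob k g (tau t) x) (lx * lx + ly * ly)).
  { intros tau lx ly Hx Hy.
    apply (Un_cv_ext (fun t => amp L (tau t) x * amp L (tau t) x
                              + amp Rr (tau t) x * amp Rr (tau t) x)).
    - intros t. symmetry. apply walk_prob; assumption.
    - apply CV_plus; apply CV_mult; assumption. }
  destruct (amp_time_limits L x _ (HlimL x)) as [HLe HLo].
  destruct (amp_time_limits Rr x _ (HlimR x)) as [HRe HRo].
  pose proof (Hsq _ _ _ HLe HRe) as Heven. pose proof (Hsq _ _ _ HLo HRo) as Hodd.
  destruct (Nat.even x); replace (0 * 0 + 0 * 0) with 0 in * by ring; split; assumption.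
Qed.

End Amplitudes.

Lemma is_series_value (u : ser) (l l' : R) : is_series u l -> l = l' -> is_series u l'.
Proof. intros H <-. exact H. Qed.

(* Values at X = 1 of the generating functions, assuming D(1) = 2b. *)
Definition lim_nu (b ep : R) : R := b * (1 - ep) / (b - ep).
Definition lim_mu (a b : R) : R := (1 - b) / a.
Definition lim_eta (a b : R) : R := (lim_mu a b - a) / b.

Definition limL (a b ep : R) (x : nat) : R :=
  match x with
  | O => lim_nu b ep
  | S x' => ep * lim_nu b ep * lim_mu a b ^ x' * lim_eta a b
  end.
Definition limR (a b ep : R) (x : nat) : R :=
  match x with O => 0 | S x' => ep * lim_nu b ep * lim_mu a b ^ x' end.

Section GeneratingFunctionLimits.

Variables (a b ep : R) (D : ser).
Hypothesis Ha : 0 < a.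
Hypothesis Hb : 0 < b.
Hypothesis Hbep : b <> ep.
Hypothesis HD0 : D 0%nat = 1.
Hypothesis HDabs : abs_summable D.
Hypothesis HDsum : is_series D (2 * b).

Lemma abs_summable_gf_m : abs_summable (gf_m a D).
Proof.
  unfold gf_m. apply abs_summable_cst_mul, abs_summable_tail, abs_summable_sub; [|exact HDabs].
  apply abs_summable_add; [apply abs_summable_cst|apply abs_summable_X].
Qed.

Lemma is_series_gf_m : is_series (gf_m a D) (lim_mu a b).
Proof.
  unfold gf_m. eapply is_series_value.
  - apply is_series_cst_mul, is_series_tail, is_series_sub; [|exact HDsum].
    apply is_series_add; [apply is_series_cst|apply is_series_X].
  - unfold ssub, sadd, sopp, lim_mu. rewrite HD0. simpl. field. lra.
Qed.

Lemma abs_summable_gf_h : abs_summable (gf_h a b D).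
Proof.
  unfold gf_h. apply abs_summable_cst_mul, abs_summable_sub;
    [apply abs_summable_gf_m|apply abs_summable_cst].
Qed.

Lemma is_series_gf_h : is_series (gf_h a b D) (lim_eta a b).
Proof.
  unfold gf_h. eapply is_series_value.
  - apply is_series_cst_mul, is_series_sub; [apply is_series_gf_m|apply is_series_cst].
  - unfold lim_eta. field. lra.
Qed.

Lemma abs_summable_gf_N : abs_summable (gf_N b ep D).
Proof.
  unfold gf_N. apply abs_summable_cst_mul.
  apply abs_summable_sub; [apply abs_summable_sub|apply abs_summable_cst_mul, HDabs].
  - apply abs_summable_mul; [apply abs_summable_add|]; apply abs_summable_cst.
  - apply abs_summable_cst_mul, abs_summable_sub; [apply abs_summable_cst|apply abs_summable_X].
Qed.

Lemma is_series_gf_N : is_series (gf_N b ep D) (lim_nu b ep).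
Proof.
  unfold gf_N. eapply is_series_value.
  - apply is_series_cst_mul.
    apply is_series_sub; [apply is_series_sub|apply is_series_cst_mul, HDsum].
    + apply is_series_mul; [apply abs_summable_add; apply abs_summable_cst
                           |apply abs_summable_cst
                           |apply is_series_add; apply is_series_cst
                           |apply is_series_cst].
    + apply is_series_cst_mul, is_series_sub; [apply is_series_cst|apply is_series_X].
  - unfold lim_nu. field. lra.
Qed.

(* Each generating function is ones * G with G absolutely summable, so its
   coefficients converge to G(1). *)
Lemma Rgf_limits x : Un_cv (Rgf a b ep D x) (limR a b ep x).
Proof.
  destruct x as [|x].
  - apply (Un_cv_ext (fun _ => 0)); [intros [|n]; reflexivity|apply Un_cv_const].
  - replace (Rgf a b ep D (S x)) with (ones * (cst ep * gf_N b ep D * spow (gf_m a D) x))%S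
      by (simpl; unfold gf_l0; ring).
    apply coef_ones_mul_cv. simpl limR.
    apply is_series_mul; auto using abs_summable_spow, abs_summable_gf_m, is_series_spow,
      is_series_gf_m, abs_summable_cst_mul, abs_summable_gf_N.
    apply is_series_cst_mul, is_series_gf_N.
Qed.

Lemma Lgf_limits x : Un_cv (Lgf a b ep D x) (limL a b ep x).
Proof.
  destruct x as [|x].
  - apply coef_ones_mul_cv, is_series_gf_N.
  - replace (Lgf a b ep D (S x))
      with (ones * (cst ep * gf_N b ep D * spow (gf_m a D) x * gf_h a b D))%S
      by (simpl; unfold gf_l0; ring).
    apply coef_ones_mul_cv. simpl limL.
    apply is_series_mul; auto using abs_summable_spow, abs_summable_gf_m, abs_summable_gf_h,
      abs_summable_mul, abs_summable_cst_mul, abs_summable_gf_N, is_series_gf_h.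
    apply is_series_mul; auto using abs_summable_spow, abs_summable_gf_m, is_series_spow,
      is_series_gf_m, abs_summable_cst_mul, abs_summable_gf_N.
    apply is_series_cst_mul, is_series_gf_N.
Qed.
End GeneratingFunctionLimits.

Section Coin.

Variable k : nat.
Hypothesis hk : (3 <= k)%nat.

Lemma coin_sqrt : exists s, 1 < s /\ INR k = s * s + 1 /\
  a_k k = 2 * s / (s * s + 1) /\ b_k k = 1 - 2 / (s * s + 1).
Proof.
  apply le_INR in hk. simpl in hk.
  exists (sqrt (INR k - 1)).
  assert (Hs : sqrt (INR k - 1) * sqrt (INR k - 1) = INR k - 1) by (apply sqrt_sqrt; lra).
  assert (Hpos : 0 <= sqrt (INR k - 1)) by apply sqrt_pos.
  assert (HK : INR k = sqrt (INR k - 1) * sqrt (INR k - 1) + 1) by lra.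
  split; [nra|split; [exact HK|]]. unfold a_k, b_k. rewrite <- HK. split; reflexivity.
Qed.

Lemma coin_params : 0 < a_k k /\ 0 < b_k k /\ a_k k * a_k k + b_k k * b_k k = 1.
Proof.
  destruct coin_sqrt as (s & Hs1 & _ & -> & ->).
  split; [|split].
  - apply Rdiv_lt_0_compat; nra.
  - replace (1 - 2 / (s * s + 1)) with ((s * s - 1) / (s * s + 1)) by (field; nra).
    apply Rdiv_lt_0_compat; nra.
  - field. nra.
Qed.

Lemma coin_b_lt_1 : b_k k < 1.
Proof.
  destruct coin_sqrt as (s & Hs1 & _ & _ & ->).
  assert (0 < 2 / (s * s + 1)) by (apply Rdiv_lt_0_compat; nra). lra.
Qed.

Lemma coin_mu_eta : lim_mu (a_k k) (b_k k) * lim_mu (a_k k) (b_k k) = 1 / (INR k - 1) /\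
  lim_eta (a_k k) (b_k k) = - lim_mu (a_k k) (b_k k).
Proof.
  destruct coin_sqrt as (s & Hs1 & -> & -> & ->).
  unfold lim_eta, lim_mu. split; field; split; nra.
Qed.

Lemma coin_nu : lim_nu (b_k k) (-1) = (INR k - 2) / (INR k - 1).
Proof.
  destruct coin_sqrt as (s & Hs1 & -> & _ & ->).
  unfold lim_nu. field. nra.
Qed.

End Coin.

(* The series D for the walk: z = (a + ib)^2 = (a^2 - b^2) + 2abi. *)
Definition walk_D (a b : R) : ser := Dser (a * a - b * b, 2 * a * b).

Section WalkD.

Variables (a b : R).
Hypothesis Hb : 0 < b.
Hypothesis Hab : a * a + b * b = 1.

Lemma walk_D_unit : Cnorm2 (a * a - b * b, 2 * a * b) = 1.
Proof.
  unfold Cnorm2. simpl.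
  transitivity ((a * a + b * b) * (a * a + b * b)); [ring|]. rewrite Hab. ring.
Qed.

Lemma walk_D_square : (walk_D a b * walk_D a b
  = (s1 + X) * (s1 + X) - (s1 + s1) * (s1 + s1) * cst a * cst a * X)%S.
Proof.
  unfold walk_D. rewrite Dser_square by exact walk_D_unit. simpl fst.
  replace (2 * (a * a - b * b)) with (2 * (2 * (a * a)) - 2 * 1) by nra.
  rewrite cst_sub, !cst_two, cst_mul. fold s1. ring.
Qed.

(* D(1) = |1 - z| = sqrt (4 b^2) = 2b. *)
Lemma is_series_walk_D : is_series (walk_D a b) (2 * b).
Proof.
  unfold walk_D. eapply is_series_value; [apply is_series_Dser, walk_D_unit|].
  simpl. replace (2 - 2 * (a * a - b * b)) with ((2 * b) * (2 * b)) by nra.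
  apply sqrt_square. lra.
Qed.

Lemma walk_D_coef0 : walk_D a b 0%nat = 1.
Proof. apply Dser_coef0. Qed.

Lemma abs_summable_walk_D : abs_summable (walk_D a b).
Proof. apply abs_summable_Dser, walk_D_unit. Qed.

End WalkD.

Definition lim_occupation (a b ep : R) (x : nat) : R :=
  limL a b ep x * limL a b ep x + limR a b ep x * limR a b ep x.

(* Limits of the occupation probabilities for a real boundary phase
   e^{i gamma} = ep = +-1 (with b_k <> ep, so that nu is well defined). *)
Lemma walk_limits k g ep : (3 <= k)%nat -> Cexpi g = (ep, 0) -> ep * ep = 1 ->
  b_k k <> ep -> forall x,
    Un_cv (fun t => prob k g (2 * t) x)
      (if Nat.even x then lim_occupation (a_k k) (b_k k) ep x else 0) /\
    Un_cv (fun t => prob k g (2 * t + 1) x)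
      (if Nat.even x then 0 else lim_occupation (a_k k) (b_k k) ep x).
Proof.
  intros hk Hg Hep Hbep.
  destruct (coin_params k hk) as (Ha & Hb & Hab).
  set (a := a_k k). set (b := b_k k). set (D := walk_D a b).
  pose proof (walk_D_square a b Hab) as HDsq.
  pose proof (walk_D_coef0 a b) as HD0.
  pose proof (abs_summable_walk_D a b Hab) as HDabs.
  pose proof (is_series_walk_D a b Hb Hab) as HDsum.
  apply (walk_prob_limits (Lgf a b ep D) (Rgf a b ep D) a b ep); try reflexivity; try assumption.
  - apply Lgf_coef_S; assumption.
  - intros x. rewrite Lgf_coef_0; reflexivity || assumption.
  - intros n. destruct n; reflexivity.
  - apply Rgf_coef_1.
  - apply Rgf_coef_S; assumption.
  - rewrite Lgf_coef_0; reflexivity || assumption.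
  - apply Lgf_limits; assumption.
  - apply Rgf_limits; assumption.
Qed.

(* Case (A): for ep = 1 the value nu vanishes, hence so do all limits. *)
Lemma lim_occupation_phase_one a b x : lim_occupation a b 1 x = 0.
Proof.
  assert (Hnu : lim_nu b 1 = 0) by (unfold lim_nu, Rdiv; ring).
  unfold lim_occupation. destruct x; simpl; rewrite Hnu; ring.
Qed.

Lemma lim_occupation_phase_minus_one k x : (3 <= k)%nat ->
  (if Nat.even x then lim_occupation (a_k k) (b_k k) (-1) x else 0) = PE_B k x /\
  (if Nat.even x then 0 else lim_occupation (a_k k) (b_k k) (-1) x) = PO_B k x.
Proof.
  intros hk.
  assert (HK : 3 <= INR k) by (apply le_INR in hk; simpl in hk; lra).
  destruct (coin_mu_eta k hk) as [Hmu Heta].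
  assert (HV : lim_occupation (a_k k) (b_k k) (-1) x = ((INR k - 2) / (INR k - 1)) ^ 2
                   * (delta0 x + (1 - delta0 x) * INR k * (1 / (INR k - 1)) ^ x)).
  { unfold lim_occupation. rewrite <- (coin_nu k hk). destruct x as [|x]; simpl limL; simpl limR.
    - simpl. ring.
    - rewrite Heta. set (mu := lim_mu (a_k k) (b_k k)) in *.
      transitivity (lim_nu (b_k k) (-1) ^ 2 * (mu * mu) ^ x * (mu * mu + 1));
        [rewrite Rpow_mult_distr; ring|].
      rewrite Hmu, <- (tech_pow_Rmult (1 / (INR k - 1)) x). simpl delta0. field. lra. }
  unfold PE_B, PO_B. rewrite HV.
  destruct (Nat.even x) eqn:Hx; split; try reflexivity.
  destruct x as [|x]; [discriminate|]. simpl delta0. ring.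
Qed.

Theorem theorem1 (k : nat) (hk : (3 <= k)%nat) :
  (forall x : nat,
      Un_cv (fun t => prob k 0 (2 * t) x) 0 /\
      Un_cv (fun t => prob k 0 (2 * t + 1) x) 0) /\
  (forall x : nat,
      Un_cv (fun t => prob k PI (2 * t) x) (PE_B k x) /\
      Un_cv (fun t => prob k PI (2 * t + 1) x) (PO_B k x)).
Proof.
  destruct (coin_params k hk) as (_ & Hb & _).
  pose proof (coin_b_lt_1 k hk) as Hb1.
  split; intros x.
  -
    assert (Hg : Cexpi 0 = (1, 0)) by (unfold Cexpi; rewrite cos_0, sin_0; reflexivity).
    destruct (walk_limits k 0 1 hk Hg ltac:(ring) ltac:(lra) x) as [Heven Hodd].
    rewrite lim_occupation_phase_one in Heven, Hodd.
    destruct (Nat.even x); split; assumption.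
  -
    assert (Hg : Cexpi PI = (-1, 0)) by (unfold Cexpi; rewrite cos_PI, sin_PI; reflexivity).
    destruct (walk_limits k PI (-1) hk Hg ltac:(ring) ltac:(lra) x) as [Heven Hodd].
    destruct (lim_occupation_phase_minus_one k x hk) as [<- <-].
    split; assumption.
Qed.
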